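(* Let $\mathcal{A}$ be a Desargues affine plane, let $O\neq I$ be points, and let $\delta$ be a dilatation of $\mathcal{A}$ having a fixed point (which may lie on the line $\ell^{OI}$ or off it). Equip $\ell^{OI}$ with the skew field structure with zero $O$ and unit $I$, and the line $\delta(\ell^{OI})$ with the skew field structure with zero $\delta(O)$ and unit $\delta(I)$. Then for all $A,B\in\ell^{OI}$ with $B\neq O$, \[ \delta(r(A:B))=r(\delta(A):\delta(B)), \] where the ratio on the left is computed in $\ell^{OI}$ and the ratio on the right in $\delta(\ell^{OI})$.
   Context: A Desargues affine plane is an incidence structure of points and lines in which any two distinct points lie on exactly one line, through a point not on a line $\ell$ there is exactly one line disjoint from $\ell$ (Playfair), there exist three non-collinear points, and Desargues' axiom holds: if $A,B,C,A',B',C'$ are points such that the pairwise distinct lines $AA',BB',CC'$ are either all parallel or all pass through one point, and $AB\parallel A'B'$, $BC\parallel B'C'$ (with $AB\neq A'B'$, $BC\neq B'C'$, $A\ne C$, $A'\ne C'$), then $AC\parallel A'C'$. Skew field on a line: for distinct points $O,I$ and points $A,B$ on the line $\ell^{OI}$, addition is defined by: choose a point $B_1\notin\ell^{OI}$; let $P_1$ be the intersection of the line through $B_1$ parallel to $\ell^{OI}$ with the line through $A$ parallel to $OB_1$; then $A+B$ is the intersection of $\ell^{OI}$ with the line through $P_1$ parallel to $BB_1$. Multiplication is defined by: choose $B_1\notin\ell^{OI}$; let $P_1$ be the intersection of the line through $A$ parallel to $IB_1$ with the line $OB_1$; then $A\cdot B$ is the intersection of $\ell^{OI}$ with the line through $P_1$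 parallel to $BB_1$. These operations do not depend on the choice of $B_1$ and make $(\ell^{OI},+,\cdot)$ a skew field with zero $O$ and unit $I$; the same construction applies to any line with any chosen pair of distinct points as zero and unit. $X^{-1}$ denotes the multiplicative inverse. Ratio of two points on a line with chosen zero $O$: $r(A:B)=B^{-1}A$ for $B\neq O$. A dilatation of $\mathcal{A}$ is a collineation $\delta$ such that $\delta(P)\delta(Q)\parallel PQ$ for all points $P\neq Q$. *)

From Stdlib Require Import ClassicalEpsilon.

Set Implicit Arguments.

Section Plane.
Variables (Point Line : Type) (inc : Point -> Line -> Prop).

Definition par (l m : Line) : Prop :=
  l = m \/ ~ (exists P, inc P l /\ inc P m).

Definition collinear (A B C : Point) : Prop :=
  exists l, inc A l /\ inc B l /\ inc C l.

Definition desargues_axiom : Prop :=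
  forall (A B C A' B' C' : Point)
         (lAA lBB lCC lAB lA'B' lBC lB'C' lAC lA'C' : Line),
    A <> A' -> B <> B' -> C <> C' ->
    inc A lAA -> inc A' lAA -> inc B lBB -> inc B' lBB ->
    inc C lCC -> inc C' lCC ->
    lAA <> lBB -> lBB <> lCC -> lAA <> lCC ->
    ((par lAA lBB /\ par lBB lCC /\ par lAA lCC) \/
     (exists P, inc P lAA /\ inc P lBB /\ inc P lCC)) ->
    A <> B -> A' <> B' -> B <> C -> B' <> C' -> A <> C -> A' <> C' ->
    inc A lAB -> inc B lAB -> inc A' lA'B' -> inc B' lA'B' ->
    inc B lBC -> inc C lBC -> inc B' lB'C' -> inc C' lB'C' ->
    inc A lAC -> inc C lAC -> inc A' lA'C' -> inc C' lA'C' ->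
    lAB <> lA'B' -> lBC <> lB'C' ->
    par lAB lA'B' -> par lBC lB'C' -> par lAC lA'C'.

Definition desargues_affine_plane : Prop :=
  (forall P Q, P <> Q ->
     exists l, inc P l /\ inc Q l /\ (forall m, inc P m -> inc Q m -> m = l)) /\
  (forall P l, ~ inc P l ->
     exists m, inc P m /\ par m l /\ (forall m', inc P m' -> par m' l -> m' = m)) /\
  (exists A B C : Point, ~ collinear A B C) /\
  desargues_axiom.

Definition on_line (O I X : Point) : Prop :=
  exists l, inc O l /\ inc I l /\ inc X l.

Definition par_to (m : Line) (X Y : Point) : Prop :=
  exists n, inc X n /\ inc Y n /\ par m n.

Definition mul_rel (O I A B C : Point) : Prop :=
  on_line O I C /\
  exists B1 P1 : Point, ~ on_line O I B1 /\
    (exists m, inc A m /\ par_to m I B1 /\ inc P1 m) /\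
    (exists n, inc O n /\ inc B1 n /\ inc P1 n) /\
    (exists k, inc P1 k /\ par_to k B B1 /\ inc C k).

Definition mul (O I A B : Point) : Point :=
  epsilon (inhabits O) (fun C => mul_rel O I A B C).

Definition inv (O I X : Point) : Point :=
  epsilon (inhabits O) (fun Y => on_line O I Y /\ mul O I Y X = I).

Definition ratio (O I A B : Point) : Point := mul O I (inv O I B) A.

Definition collineation (f : Point -> Point) : Prop :=
  (forall P Q, f P = f Q -> P = Q) /\ (forall Q, exists P, f P = Q) /\
  (forall l, exists m, forall P, inc P m <-> exists Q, inc Q l /\ f Q = P).

Definition dilatation (f : Point -> Point) : Prop :=
  collineation f /\
  forall P Q, P <> Q -> forall l m,
    inc P l -> inc Q l -> inc (f P) m -> inc (f Q) m -> par l m.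

End Plane.

(* The product A.B on l^{OI} is read off a figure built from an auxiliary point
   B1 off the line: P1 is where the parallel to IB1 through A meets OB1, and A.B is
   where the parallel to BB1 through P1 meets l^{OI}.  Two applications of
   Desargues' axiom to triangles in perspective from O show that the result does not
   depend on B1, so the products and inverses picked by [epsilon] are the points
   produced by any such figure.  A dilatation maps lines to lines and preserves
   parallelism, so it carries a figure for (A, B) on l^{OI} to a figure for
   (delta A, delta B) on delta(l^{OI}) with zero delta O and unit delta I.  Hence
   delta commutes with products and inverses, and therefore with ratios. *)

From Pilot Require Import Defs.
From Stdlib Require Import Classical ClassicalEpsilon.
Set Implicit Arguments.

Section AffinePlane.
Variables (Point Line : Type) (inc : Point -> Line -> Prop).
Hypotheses (HA : desargues_affine_plane inc) (Line_inhabited : inhabited Line).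

Local Notation par := (@Defs.par Point Line inc).

Lemma incidence P Q : P <> Q ->
  exists l, inc P l /\ inc Q l /\ (forall m, inc P m -> inc Q m -> m = l).
Proof. destruct HA as [H _]; exact (H P Q). Qed.

Lemma playfair P l : ~ inc P l ->
  exists m, inc P m /\ par m l /\ (forall m', inc P m' -> par m' l -> m' = m).
Proof. destruct HA as [_ [H _]]; exact (H P l). Qed.

Lemma desargues : desargues_axiom inc.
Proof. destruct HA as [_ [_ [_ H]]]; exact H. Qed.

Lemma exists_point_off L : exists P, ~ inc P L.
Proof.
  destruct HA as [_ [_ [[X [Y [Z nc]]] _]]].
  apply NNPP; intro E. apply nc. exists L.
  repeat split; apply NNPP; intro F; apply E; eauto.
Qed.

Lemma line_eq_of_two_points X Y l m :
  X <> Y -> inc X l -> inc Y l -> inc X m -> inc Y m -> l = m.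
Proof.
  intros H a b c d. destruct (incidence H) as [n [_ [_ Hn]]].
  rewrite (Hn l a b), (Hn m c d); reflexivity.
Qed.

Lemma point_eq_of_two_lines P Q l m :
  l <> m -> inc P l -> inc P m -> inc Q l -> inc Q m -> P = Q.
Proof.
  intros H a b c d. apply NNPP; intro E. apply H.
  apply (line_eq_of_two_points E); auto.
Qed.

Lemma par_refl l : par l l.
Proof. left; reflexivity. Qed.

Lemma par_sym l m : par l m -> par m l.
Proof.
  intros [H|H]; [left; auto | right].
  intros [P [a b]]. apply H; eauto.
Qed.

Lemma par_inc_eq l m P : par l m -> inc P l -> inc P m -> l = m.
Proof. intros [H|H] a b; auto. exfalso; apply H; eauto. Qed.

Lemma par_trans l m n : par l m -> par m n -> par l n.
Proof.
  intros H1 H2.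
  destruct (classic (exists P, inc P l /\ inc P n)) as [[P [a b]]|Hn];
    [| right; auto].
  destruct (classic (inc P m)) as [Pm|Pm].
  - rewrite (par_inc_eq H1 a Pm), <- (par_inc_eq H2 Pm b). apply par_refl.
  - destruct (playfair Pm) as [k [_ [_ Hk]]].
    rewrite (Hk l a H1), (Hk n b (par_sym H2)). apply par_refl.
Qed.

Lemma not_par_meet l m : ~ par l m -> exists P, inc P l /\ inc P m.
Proof. intro H. apply NNPP; intro E. apply H. right. exact E. Qed.

Definition line_through (X Y : Point) : Line :=
  epsilon Line_inhabited (fun l => inc X l /\ inc Y l).

Lemma line_through_spec X Y : X <> Y -> inc X (line_through X Y) /\ inc Y (line_through X Y).
Proof.
  intro H. unfold line_through. apply epsilon_spec.
  destruct (incidence H) as [n [a [b _]]]. eauto.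
Qed.

Lemma line_through_l X Y : X <> Y -> inc X (line_through X Y).
Proof. intro H; apply (line_through_spec H). Qed.

Lemma line_through_r X Y : X <> Y -> inc Y (line_through X Y).
Proof. intro H; apply (line_through_spec H). Qed.

Lemma line_through_eq X Y l : X <> Y -> inc X l -> inc Y l -> line_through X Y = l.
Proof.
  intros H a b. apply (line_eq_of_two_points H); auto using line_through_l, line_through_r.
Qed.

Definition par_through (X : Point) (M : Line) : Line :=
  epsilon Line_inhabited (fun m => inc X m /\ par m M).

Lemma par_through_spec X M : inc X (par_through X M) /\ par (par_through X M) M.
Proof.
  unfold par_through. apply epsilon_spec.
  destruct (classic (inc X M)) as [H|H].
  - exists M; split; auto using par_refl.
  - destruct (playfair H) as [k [a [b _]]]; eauto.
Qed.

Lemma par_through_inc X M : inc X (par_through X M).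
Proof. apply par_through_spec. Qed.

Lemma par_through_par X M : par (par_through X M) M.
Proof. apply par_through_spec. Qed.

Lemma par_through_eq X M m : inc X m -> par m M -> par_through X M = m.
Proof.
  intros a b. apply (par_inc_eq (P := X)); auto using par_through_inc.
  apply (par_trans (par_through_par X M)), par_sym; auto.
Qed.

Lemma neq_on_off L X Y : inc X L -> ~ inc Y L -> X <> Y.
Proof. intros a b E; subst; auto. Qed.

Lemma join_off_meet L Y B1 X :
  inc Y L -> ~ inc B1 L -> inc X L -> inc X (line_through Y B1) -> X = Y.
Proof.
  intros a b c d. assert (Y <> B1) by (eapply neq_on_off; eauto).
  apply (@point_eq_of_two_lines X Y L (line_through Y B1)); auto using line_through_l.
  intro E; apply b; rewrite E; apply line_through_r; auto.
Qed.

Lemma par_join_off_meet L B B1 k X Y : inc B L -> ~ inc B1 L ->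
  par k (line_through B B1) -> inc X k -> inc Y k -> inc X L -> inc Y L -> X = Y.
Proof.
  intros a b c d e f g. pose proof (neq_on_off a b) as nBB1.
  apply (@point_eq_of_two_lines X Y k L); auto.
  intro E; subst k. apply b. rewrite (par_inc_eq c a (line_through_l nBB1)).
  apply line_through_r; auto.
Qed.

Lemma join_off_neq L Y Z B1 : inc Y L -> inc Z L -> Y <> Z -> ~ inc B1 L ->
  line_through Y B1 <> line_through Z B1.
Proof.
  intros a b c d E. apply c. symmetry. apply (join_off_meet a d b).
  rewrite E. apply line_through_l. eapply neq_on_off; eauto.
Qed.

Lemma join_off_not_par L Y Z B1 : inc Y L -> inc Z L -> Y <> Z -> ~ inc B1 L ->
  ~ par (line_through Y B1) (line_through Z B1).
Proof.
  intros a b c d E. apply (join_off_neq a b c d).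
  apply (par_inc_eq (P := B1) E); apply line_through_r; eapply neq_on_off; eauto.
Qed.

Section MulFigure.
Variables (L : Line) (O I : Point).
Hypotheses (HOI : O <> I) (HO : inc O L) (HI : inc I L).

Definition mul_figure (A B B1 P1 C : Point) : Prop :=
  ~ inc B1 L /\ inc P1 (line_through O B1) /\ inc P1 (par_through A (line_through I B1)) /\
  inc C L /\ inc C (par_through P1 (line_through B B1)).

Lemma mul_figure_exists A B B1 : inc B L -> ~ inc B1 L -> exists P1 C, mul_figure A B B1 P1 C.
Proof.
  intros hB nB1. assert (B <> B1) by (eapply neq_on_off; eauto).
  destruct (@not_par_meet (par_through A (line_through I B1)) (line_through O B1))
    as [P1 [a1 a2]].
  { intro E. apply (join_off_not_par HI HO (not_eq_sym HOI) nB1).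
    exact (par_trans (par_sym (par_through_par A _)) E). }
  destruct (@not_par_meet (par_through P1 (line_through B B1)) L) as [C [c1 c2]].
  { intro E. apply nB1.
    rewrite <- (par_inc_eq (P := B) (par_trans (par_sym (par_through_par P1 _)) E));
      auto using line_through_l, line_through_r. }
  exists P1, C. unfold mul_figure; auto.
Qed.

Lemma mul_figure_zero_l B B1 P1 C : inc B L -> mul_figure O B B1 P1 C -> C = O.
Proof.
  intros hB [nB1 [p1 [p2 [hC hC2]]]].
  assert (O <> B1) by (eapply neq_on_off; eauto).
  assert (P1 = O).
  { apply (@point_eq_of_two_lines P1 O (par_through O (line_through I B1)) (line_through O B1));
      auto using par_through_inc, line_through_l.
    intro E. apply (join_off_not_par HO HI HOI nB1). rewrite <- E. apply par_through_par. }
  subst P1. apply (par_join_off_meet hB nB1 (par_through_par O _)); auto using par_through_inc.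
Qed.

Lemma mul_figure_one_l B B1 P1 C : inc B L -> mul_figure I B B1 P1 C -> C = B.
Proof.
  intros hB [nB1 [p1 [p2 [hC hC2]]]].
  assert (O <> B1) by (eapply neq_on_off; eauto).
  pose proof (neq_on_off HI nB1) as nIB1. pose proof (neq_on_off hB nB1) as nBB1.
  rewrite (par_through_eq (line_through_l nIB1) (par_refl _)) in p2.
  assert (P1 = B1).
  { apply (@point_eq_of_two_lines P1 B1 (line_through I B1) (line_through O B1));
      auto using line_through_r.
    intro E. apply (join_off_neq HO HI HOI nB1). auto. }
  subst P1. rewrite (par_through_eq (line_through_r nBB1) (par_refl _)) in hC2.
  apply (join_off_meet hB nB1 hC hC2).
Qed.

Lemma mul_figure_zero_r A B1 P1 C : mul_figure A O B1 P1 C -> C = O.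
Proof.
  intros [nB1 [p1 [p2 [hC hC2]]]].
  rewrite (par_through_eq p1 (par_refl _)) in hC2.
  apply (join_off_meet HO nB1 hC hC2).
Qed.

Lemma aux_point_neq_O A B1 P1 : inc A L -> A <> O -> ~ inc B1 L ->
  inc P1 (par_through A (line_through I B1)) -> P1 <> O.
Proof.
  intros hA nA nB1 p E. subst P1.
  apply nA. apply (par_join_off_meet HI nB1 (par_through_par A _)); auto using par_through_inc.
Qed.

Lemma aux_point_neq_B1 A B1 P1 : inc A L -> A <> I -> ~ inc B1 L ->
  inc P1 (par_through A (line_through I B1)) -> P1 <> B1.
Proof.
  intros hA nA nB1 p E. subst P1.
  apply nA. apply (join_off_meet HI nB1 hA).
  rewrite <- (par_inc_eq (par_through_par A _) p (line_through_r (neq_on_off HI nB1))).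
  apply par_through_inc.
Qed.

Section Independence.
Variables (A B B1 P1 C1 B2 P2 C2 : Point).
Hypotheses (hA : inc A L) (nAO : A <> O) (nAI : A <> I).
Hypotheses (nB1 : ~ inc B1 L) (P1_OB1 : inc P1 (line_through O B1))
  (P1_A : inc P1 (par_through A (line_through I B1))).
Hypotheses (nB2 : ~ inc B2 L) (P2_OB2 : inc P2 (line_through O B2))
  (P2_A : inc P2 (par_through A (line_through I B2))).
Hypothesis (B2_OB1 : ~ inc B2 (line_through O B1)).

Lemma joins_O_neq : line_through O B1 <> line_through O B2.
Proof.
  assert (O <> B2) by (eapply neq_on_off; eauto).
  intro E; apply B2_OB1; rewrite E; apply line_through_r; auto.
Qed.

Lemma aux_points_neq : P1 <> P2.
Proof.
  intro E; subst P2. apply (aux_point_neq_O hA nAO nB1 P1_A).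
  assert (O <> B1) by (eapply neq_on_off; eauto).
  assert (O <> B2) by (eapply neq_on_off; eauto).
  apply (point_eq_of_two_lines joins_O_neq); auto using line_through_l.
Qed.

Lemma aux_points_par : par (line_through B1 B2) (line_through P1 P2).
Proof.
  pose proof (aux_point_neq_O hA nAO nB1 P1_A) as nP1O.
  pose proof (aux_point_neq_O hA nAO nB2 P2_A) as nP2O.
  pose proof (aux_point_neq_B1 hA nAI nB1 P1_A) as nP1B1.
  pose proof (aux_point_neq_B1 hA nAI nB2 P2_A) as nP2B2.
  assert (O <> B1) by (eapply neq_on_off; eauto).
  assert (O <> B2) by (eapply neq_on_off; eauto).
  assert (I <> B1) by (eapply neq_on_off; eauto).
  assert (I <> B2) by (eapply neq_on_off; eauto).
  assert (B1 <> B2) by (intro E; subst; apply B2_OB1, line_through_r; auto).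
  assert (L <> line_through O B1) by (intro E; apply nB1; rewrite E; apply line_through_r; auto).
  assert (L <> line_through O B2) by (intro E; apply nB2; rewrite E; apply line_through_r; auto).
  assert (A <> P1) by (intro E; subst; apply nP1O, (join_off_meet HO nB1 hA P1_OB1)).
  assert (A <> P2) by (intro E; subst; apply nP2O, (join_off_meet HO nB2 hA P2_OB2)).
  assert (line_through I B1 <> par_through A (line_through I B1)).
  { intro E. apply nAI. apply (join_off_meet HI nB1 hA). rewrite E. apply par_through_inc. }
  assert (line_through I B2 <> par_through A (line_through I B2)).
  { intro E. apply nAI. apply (join_off_meet HI nB2 hA). rewrite E. apply par_through_inc. }
  apply (desargues (A := B1) (B := I) (C := B2) (A' := P1) (B' := A) (C' := P2)
           (lAA := line_through O B1) (lBB := L) (lCC := line_through O B2)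
           (lAB := line_through I B1) (lA'B' := par_through A (line_through I B1))
           (lBC := line_through I B2) (lB'C' := par_through A (line_through I B2)));
    auto using line_through_l, line_through_r, par_through_inc, par_sym, par_through_par,
      joins_O_neq, aux_points_neq.
  right. exists O. auto using line_through_l.
Qed.

Hypotheses (hB : inc B L) (nBO : B <> O).
Hypotheses (C1_L : inc C1 L) (C1_P1 : inc C1 (par_through P1 (line_through B B1))).
Hypotheses (C2_L : inc C2 L) (C2_P2 : inc C2 (par_through P2 (line_through B B2))).

Lemma aux_points_same_product : C1 = C2.
Proof.
  pose proof (aux_point_neq_O hA nAO nB1 P1_A) as nP1O.
  pose proof (aux_point_neq_B1 hA nAI nB1 P1_A) as nP1B1.
  pose proof (aux_point_neq_B1 hA nAI nB2 P2_A) as nP2B2.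
  pose proof aux_points_par as B1B2_P1P2.
  assert (O <> B1) by (eapply neq_on_off; eauto).
  assert (O <> B2) by (eapply neq_on_off; eauto).
  assert (nBB1 : B <> B1) by (eapply neq_on_off; eauto).
  assert (B <> B2) by (eapply neq_on_off; eauto).
  assert (B1 <> B2) by (intro E; subst; apply B2_OB1, line_through_r; auto).
  assert (L <> line_through O B1) by (intro E; apply nB1; rewrite E; apply line_through_r; auto).
  assert (L <> line_through O B2) by (intro E; apply nB2; rewrite E; apply line_through_r; auto).
  assert (C1 <> P1) by (intro E; subst; apply nP1O, (join_off_meet HO nB1 C1_L P1_OB1)).
  assert (nC1P2 : C1 <> P2).
  { intro E; subst. apply (aux_point_neq_O hA nAO nB2 P2_A), (join_off_meet HO nB2 C1_L P2_OB2). }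
  (* P1 lies on OB1 and is not B1, so it is not on BB1 *)
  assert (nP1_BB1 : ~ inc P1 (line_through B B1)).
  { intro E. apply nP1B1. apply (point_eq_of_two_lines (join_off_neq hB HO nBO nB1));
      auto using line_through_r. }
  assert (B <> C1).
  { intro E; subst C1. apply nP1_BB1.
    rewrite <- (par_inc_eq (par_through_par P1 _) C1_P1 (line_through_l nBB1)).
    apply par_through_inc. }
  assert (BB2_C1P2 : par (line_through B B2) (line_through C1 P2)).
  { apply (desargues (A := B) (B := B1) (C := B2) (A' := C1) (B' := P1) (C' := P2)
             (lAA := L) (lBB := line_through O B1) (lCC := line_through O B2)
             (lAB := line_through B B1) (lA'B' := par_through P1 (line_through B B1))
             (lBC := line_through B1 B2) (lB'C' := line_through P1 P2));
      auto using line_through_l, line_through_r, par_through_inc, par_sym, par_through_par,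
        joins_O_neq, aux_points_neq.
    - right. exists O. auto using line_through_l.
    - intro E. apply nP1_BB1. rewrite E. apply par_through_inc.
    - intro E. apply nP1B1.
      apply (@point_eq_of_two_lines P1 B1 (line_through B1 B2) (line_through O B1));
        auto using line_through_l, line_through_r.
      + intro E'. apply B2_OB1. rewrite <- E'. apply line_through_r; auto.
      + rewrite E. apply line_through_l, aux_points_neq. }
  rewrite (par_through_eq (line_through_r nC1P2) (par_sym BB2_C1P2)) in C2_P2.
  apply (par_join_off_meet hB nB2 (par_sym BB2_C1P2)); auto using line_through_l.
Qed.

End Independence.
Lemma exists_point_off_both B1 : ~ inc B1 L ->
  exists D, ~ inc D L /\ ~ inc D (line_through O B1).
Proof.
  intros nB1. assert (nOB1 : O <> B1) by (eapply neq_on_off; eauto).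
  assert (nL : L <> line_through O B1)
    by (intro E; apply nB1; rewrite E; apply line_through_r; auto).
  destruct (@not_par_meet (par_through B1 L) (par_through I (line_through O B1)))
    as [D [d1 d2]].
  { intro E. apply nL. apply (par_inc_eq (P := O)); auto using line_through_l.
    apply (par_trans (par_sym (par_through_par B1 L))), (par_trans E), par_through_par. }
  exists D; split; intro E.
  - apply nB1. rewrite <- (par_inc_eq (par_through_par B1 L) d1 E). apply par_through_inc.
  - apply HOI. symmetry. apply (join_off_meet HO nB1 HI).
    rewrite <- (par_inc_eq (par_through_par I _) d2 E). apply par_through_inc.
Qed.

Lemma mul_figure_unique A B B1 P1 C1 B2 P2 C2 : inc A L -> inc B L ->
  mul_figure A B B1 P1 C1 -> mul_figure A B B2 P2 C2 -> C1 = C2.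
Proof.
  intros hA hB fig1 fig2.
  destruct (classic (A = O)) as [->|nAO].
  { rewrite (mul_figure_zero_l hB fig1), (mul_figure_zero_l hB fig2). reflexivity. }
  destruct (classic (A = I)) as [->|nAI].
  { rewrite (mul_figure_one_l hB fig1), (mul_figure_one_l hB fig2). reflexivity. }
  destruct (classic (B = O)) as [->|nBO].
  { rewrite (mul_figure_zero_r fig1), (mul_figure_zero_r fig2). reflexivity. }
  assert (indep : forall B1 P1 C1 B2 P2 C2,
             mul_figure A B B1 P1 C1 -> mul_figure A B B2 P2 C2 ->
             ~ inc B2 (line_through O B1) -> C1 = C2).
  { intros B1' P1' C1' B2' P2' C2' [n1 [a1 [b1 [c1 d1]]]] [n2 [a2 [b2 [c2 d2]]]] e.
    exact (aux_points_same_product hA nAO nAI n1 a1 b1 n2 a2 b2 e hB nBO c1 d1 c2 d2). }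
  destruct (classic (inc B2 (line_through O B1))) as [B2_OB1|]; [|eauto].
  (* B1 and B2 are compared through a third auxiliary point off both lines OB1 = OB2 and L *)
  assert (nB1 : ~ inc B1 L) by apply fig1.
  assert (nB2 : ~ inc B2 L) by apply fig2.
  destruct (exists_point_off_both nB1) as [D [nDL nD]].
  destruct (mul_figure_exists A hB nDL) as [P3 [C3 fig3]].
  rewrite (indep _ _ _ _ _ _ fig1 fig3 nD). symmetry. apply (indep _ _ _ _ _ _ fig2 fig3).
  rewrite (line_through_eq (neq_on_off HO nB2) (line_through_l (neq_on_off HO nB1)) B2_OB1).
  exact nD.
Qed.

Lemma on_line_iff X : on_line inc O I X <-> inc X L.
Proof.
  split.
  - intros [l [a [b c]]]. rewrite <- (line_eq_of_two_points HOI a b HO HI). exact c.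
  - intro h. exists L; auto.
Qed.

Lemma mul_rel_figure A B C : inc B L -> mul_rel inc O I A B C ->
  exists B1 P1, mul_figure A B B1 P1 C.
Proof.
  intros hB [hC [B1 [P1 [nB1 [[m [m1 [[n [n1 [n2 n3]]] m3]]]
     [[n' [o1 [o2 o3]]] [k [k1 [[n'' [r1 [r2 r3]]] k3]]]]]]]]].
  rewrite on_line_iff in hC, nB1.
  exists B1, P1. unfold mul_figure. repeat split; auto.
  - rewrite (line_through_eq (neq_on_off HO nB1) o1 o2). auto.
  - rewrite (line_through_eq (neq_on_off HI nB1) n1 n2), (par_through_eq m1 n3). auto.
  - rewrite (line_through_eq (neq_on_off hB nB1) r1 r2), (par_through_eq k1 r3). auto.
Qed.

Lemma mul_figure_rel A B B1 P1 C : inc B L -> mul_figure A B B1 P1 C ->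
  mul_rel inc O I A B C.
Proof.
  intros hB [nB1 [p1 [p2 [hC hC2]]]].
  assert (O <> B1) by (eapply neq_on_off; eauto).
  assert (I <> B1) by (eapply neq_on_off; eauto).
  assert (B <> B1) by (eapply neq_on_off; eauto).
  split; [apply on_line_iff; auto|].
  exists B1, P1. split; [rewrite on_line_iff; auto|].
  split.
  { exists (par_through A (line_through I B1)). split; [apply par_through_inc|]. split; auto.
    exists (line_through I B1). auto using line_through_l, line_through_r, par_through_par. }
  split; [exists (line_through O B1); auto using line_through_l, line_through_r|].
  exists (par_through P1 (line_through B B1)). split; [apply par_through_inc|]. split; auto.
  exists (line_through B B1). auto using line_through_l, line_through_r, par_through_par.
Qed.

Lemma mul_spec A B : inc A L -> inc B L -> mul_rel inc O I A B (mul inc O I A B).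
Proof.
  intros hA hB. unfold mul. apply epsilon_spec.
  destruct (exists_point_off L) as [B1 nB1].
  destruct (mul_figure_exists A hB nB1) as [P1 [C fig]].
  exists C. apply (mul_figure_rel hB fig).
Qed.

Lemma mul_eq A B C : inc A L -> inc B L -> mul_rel inc O I A B C -> mul inc O I A B = C.
Proof.
  intros hA hB h.
  destruct (mul_rel_figure hB (mul_spec hA hB)) as [B1 [P1 fig1]].
  destruct (mul_rel_figure hB h) as [B2 [P2 fig2]].
  apply (mul_figure_unique hA hB fig1 fig2).
Qed.

Lemma left_inv_exists X : inc X L -> X <> O -> exists Y, inc Y L /\ mul inc O I Y X = I.
Proof.
  intros hX nX. destruct (exists_point_off L) as [B1 nB1].
  assert (I <> B1) by (eapply neq_on_off; eauto).
  destruct (@not_par_meet (par_through I (line_through X B1)) (line_through O B1))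
    as [P1 [a1 a2]].
  { intro E. apply (join_off_not_par hX HO nX nB1).
    exact (par_trans (par_sym (par_through_par I _)) E). }
  destruct (@not_par_meet (par_through P1 (line_through I B1)) L) as [Y [c1 c2]].
  { intro E. apply nB1.
    rewrite <- (par_inc_eq (P := I) (par_trans (par_sym (par_through_par P1 _)) E));
      auto using line_through_l, line_through_r. }
  exists Y. split; auto. apply (mul_eq c2 hX), (mul_figure_rel (B1 := B1) (P1 := P1) hX).
  unfold mul_figure. repeat split; auto.
  - rewrite (par_through_eq c1 (par_through_par P1 _)). apply par_through_inc.
  - rewrite (par_through_eq a1 (par_through_par I _)). apply par_through_inc.
Qed.

Lemma left_inv_unique X Y1 Y2 : inc X L -> X <> O -> inc Y1 L -> inc Y2 L ->
  mul inc O I Y1 X = I -> mul inc O I Y2 X = I -> Y1 = Y2.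
Proof.
  intros hX nX h1 h2 e1 e2.
  pose proof (mul_spec h1 hX) as m1. rewrite e1 in m1.
  pose proof (mul_spec h2 hX) as m2. rewrite e2 in m2.
  destruct (mul_rel_figure hX m1) as [B1 [P1 fig1]].
  destruct (mul_rel_figure hX m2) as [B2 [P2' fig2']].
  assert (nB1 : ~ inc B1 L) by apply fig1.
  destruct (mul_figure_exists Y2 hX nB1) as [P2 [C2 fig2]].
  assert (C2 = I) by apply (mul_figure_unique h2 hX fig2 fig2'). subst C2.
  destruct fig1 as [_ [p1 [p2 [_ p3]]]]. destruct fig2 as [_ [q1 [q2 [_ q3]]]].
  (* both figures share B1 and the product I, hence the same point P1 *)
  assert (P1 = P2).
  { apply (@point_eq_of_two_lines P1 P2 (par_through I (line_through X B1)) (line_through O B1));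
      auto.
    - intro E. apply (join_off_not_par hX HO nX nB1). rewrite <- E. apply par_sym, par_through_par.
    - rewrite (par_through_eq p3 (par_through_par P1 _)). apply par_through_inc.
    - rewrite (par_through_eq q3 (par_through_par P2 _)). apply par_through_inc. }
  subst P2.
  apply (par_join_off_meet HI nB1 (par_through_par P1 _)); auto.
  - rewrite (par_through_eq p2 (par_through_par Y1 _)). apply par_through_inc.
  - rewrite (par_through_eq q2 (par_through_par Y2 _)). apply par_through_inc.
Qed.

Lemma inv_spec X : inc X L -> X <> O -> inc (inv inc O I X) L /\ mul inc O I (inv inc O I X) X = I.
Proof.
  intros hX nX. unfold inv.
  destruct (epsilon_spec (inhabits O) (fun Y => on_line inc O I Y /\ mul inc O I Y X = I))
    as [a b].
  { destruct (left_inv_exists hX nX) as [Y [c d]]. exists Y. rewrite on_line_iff. auto. }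
  rewrite on_line_iff in a. auto.
Qed.

Lemma inv_eq X Y : inc X L -> X <> O -> inc Y L -> mul inc O I Y X = I -> inv inc O I X = Y.
Proof.
  intros hX nX hY e. destruct (inv_spec hX nX) as [a b].
  apply (left_inv_unique hX nX a hY b e).
Qed.

End MulFigure.

Section Dilatation.
Variable delta : Point -> Point.
Hypothesis Hd : dilatation inc delta.

Lemma dilatation_inj P Q : delta P = delta Q -> P = Q.
Proof. destruct Hd as [[H _] _]; exact (H P Q). Qed.

Lemma dilatation_neq P Q : P <> Q -> delta P <> delta Q.
Proof. intros H E; apply H, dilatation_inj, E. Qed.

Lemma dilatation_image_line l : exists m, forall P, inc P m <-> exists Q, inc Q l /\ delta Q = P.
Proof. destruct Hd as [[_ [_ H]] _]; exact (H l). Qed.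

Lemma dilatation_par X Y : X <> Y -> par (line_through X Y) (line_through (delta X) (delta Y)).
Proof.
  intro H. destruct Hd as [_ H2].
  apply (H2 X Y H); auto using line_through_l, line_through_r, dilatation_neq.
Qed.

Lemma dilatation_line_through X Y Z : X <> Y -> inc Z (line_through X Y) ->
  inc (delta Z) (line_through (delta X) (delta Y)).
Proof.
  intros H h. destruct (dilatation_image_line (line_through X Y)) as [M HM].
  rewrite (line_through_eq (dilatation_neq H)
             (proj2 (HM _) (ex_intro _ X (conj (line_through_l H) eq_refl)))
             (proj2 (HM _) (ex_intro _ Y (conj (line_through_r H) eq_refl)))).
  apply HM. eauto.
Qed.

Lemma dilatation_par_through U V Y Z : U <> V -> inc Z (par_through Y (line_through U V)) ->
  inc (delta Z) (par_through (delta Y) (line_through (delta U) (delta V))).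
Proof.
  intros H h. destruct (classic (Y = Z)) as [<-|E]; [apply par_through_inc|].
  pose proof (line_through_eq E (par_through_inc Y _) h) as e.
  assert (p : par (line_through (delta Y) (delta Z)) (line_through (delta U) (delta V))).
  { apply (par_trans (par_sym (dilatation_par E))). rewrite e.
    apply (par_trans (par_through_par Y _)), dilatation_par, H. }
  rewrite (par_through_eq (line_through_l (dilatation_neq E)) p).
  apply line_through_r, dilatation_neq, E.
Qed.

Section ImageLine.
Variables (L : Line) (O I : Point).
Hypotheses (HOI : O <> I) (HO : inc O L) (HI : inc I L).

Let L' := line_through (delta O) (delta I).
Let HOI' : delta O <> delta I := dilatation_neq HOI.

Lemma inc_image_line X : inc X L <-> inc (delta X) L'.
Proof.
  destruct (dilatation_image_line L) as [M HM].
  replace L' with M by (symmetry; apply line_through_eq; auto; apply HM; eauto).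
  split.
  - intro h; apply HM; eauto.
  - intros h. apply HM in h. destruct h as [Q [a b]]. apply dilatation_inj in b. subst; auto.
Qed.

Lemma dilatation_mul_figure A B B1 P1 C : inc B L -> mul_figure L O I A B B1 P1 C ->
  mul_figure L' (delta O) (delta I) (delta A) (delta B) (delta B1) (delta P1) (delta C).
Proof.
  intros hB [nB1 [p1 [p2 [hC hC2]]]].
  assert (O <> B1) by (eapply neq_on_off; eauto).
  assert (I <> B1) by (eapply neq_on_off; eauto).
  assert (B <> B1) by (eapply neq_on_off; eauto).
  unfold mul_figure. repeat split.
  - rewrite <- inc_image_line; auto.
  - apply dilatation_line_through; auto.
  - apply dilatation_par_through; auto.
  - apply inc_image_line; auto.
  - apply dilatation_par_through; auto.
Qed.

Lemma dilatation_mul A B : inc A L -> inc B L ->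
  delta (mul inc O I A B) = mul inc (delta O) (delta I) (delta A) (delta B).
Proof.
  intros hA hB. pose proof (line_through_l HOI') as HO'. pose proof (line_through_r HOI') as HI'.
  destruct (mul_rel_figure HOI HO HI hB (mul_spec HOI HO HI hA hB)) as [B1 [P1 fig]].
  symmetry. apply (mul_eq HOI' HO' HI'); try apply inc_image_line; auto.
  exact (mul_figure_rel HOI' HO' HI' (proj1 (inc_image_line B) hB)
           (dilatation_mul_figure hB fig)).
Qed.

Lemma dilatation_inv B : inc B L -> B <> O ->
  delta (inv inc O I B) = inv inc (delta O) (delta I) (delta B).
Proof.
  intros hB nB. pose proof (line_through_l HOI') as HO'. pose proof (line_through_r HOI') as HI'.
  destruct (inv_spec HOI HO HI hB nB) as [a b].
  symmetry. apply (inv_eq HOI' HO' HI').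
  - apply inc_image_line; auto.
  - apply dilatation_neq; auto.
  - apply inc_image_line; auto.
  - rewrite <- dilatation_mul, b; auto.
Qed.

Lemma dilatation_ratio A B : inc A L -> inc B L -> B <> O ->
  delta (ratio inc O I A B) = ratio inc (delta O) (delta I) (delta A) (delta B).
Proof.
  intros hA hB nB. unfold ratio.
  rewrite dilatation_mul, dilatation_inv; auto. apply (inv_spec HOI HO HI hB nB).
Qed.

End ImageLine.
End Dilatation.
End AffinePlane.

Theorem mainTheorem10 (Point Line : Type) (inc : Point -> Line -> Prop)
  (HA : desargues_affine_plane inc)
  (O I : Point) (HOI : O <> I)
  (delta : Point -> Point) (Hd : dilatation inc delta)
  (Hfix : exists P, delta P = P)
  (A B : Point) (HAl : on_line inc O I A) (HBl : on_line inc O I B) (HBO : B <> O) :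
  delta (ratio inc O I A B) = ratio inc (delta O) (delta I) (delta A) (delta B).
Proof.
  destruct (incidence HA HOI) as [L [HO [HI _]]].
  rewrite (on_line_iff HA L HOI HO HI) in HAl, HBl.
  exact (dilatation_ratio HA (inhabits L) Hd L HOI HO HI A HAl HBl HBO).
Qed.
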